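(* For any $\mathcal{H}\subseteq\{0,1\}^{\mathcal{X}}$, there exists a deterministic online learner which, under apple tasting feedback, makes at most $\operatorname{AL}_1(\mathcal{H})$ mistakes on any sequence $(x_1,y_1),\dots,(x_T,y_T)$ realizable by $\mathcal{H}$ (i.e. $y_t=h(x_t)$ for all $t$ for some $h\in\mathcal{H}$).
   Context: Apple tasting feedback: in each round the learner receives $x_t\in\mathcal{X}$, predicts $\hat y_t\in\{0,1\}$, and observes the true label $y_t$ only if $\hat y_t=1$; a mistake is a round with $\hat y_t\ne y_t$. AL tree of width $w\in\mathbb{N}$ and depth $d$: a binary string $u$ is an internal node if $|u|<d$ and $u$ has fewer than $w$ ones; the tree assigns $x_u\in\mathcal{X}$ to each internal node. A path is a binary string $\sigma$ whose proper prefixes are all internal nodes but which is not itself one. The tree is shattered by $\mathcal{H}$ if for every path $\sigma$ some $h\in\mathcal{H}$ satisfies $h(x_{(\sigma_1,\dots,\sigma_{i-1})})=\sigma_i$ for all $i\le|\sigma|$. $\operatorname{AL}_w(\mathcal{H})$ is the largest $d$ such that such a tree of width $w$ and depth $d$ is shattered ($\infty$ if unbounded, $0$ if none). (For $w=1$: internal nodes are the strings $0^k$, $k<d$, and paths are $0^d$ and $0^k1$ for $k<d$.) *)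

From mathcomp Require Import all_boot.
From Stdlib Require Import ClassicalEpsilon.
Set Implicit Arguments. Unset Strict Implicit. Unset Printing Implicit Defensive.

(* History entry for round s: the instance x_s and the feedback, which is
   Some y_s if the learner predicted 1 (label revealed) and None if it
   predicted 0 (label not revealed). *)
Definition history (X : Type) := seq (X * option bool).

Definition learner (X : Type) := history X -> X -> bool.

Fixpoint mistakes_from (X : Type) (L : learner X) (hist : history X)
    (s : seq (X * bool)) : nat :=
  match s with
  | [::] => 0
  | (x, y) :: s' =>
      let p := L hist x in
      (p != y) + mistakes_from L (rcons hist (x, if p then Some y else None)) s'
  end.

Definition mistakes (X : Type) (L : learner X) (s : seq (X * bool)) : nat :=
  mistakes_from L [::] s.

Definition realizable (X : Type) (H : (X -> bool) -> Prop) (s : seq (X * bool)) :=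
  exists h, H h /\ all (fun p => h p.1 == p.2) s.

Definition AL_internal (w d : nat) (u : seq bool) : bool :=
  (size u < d) && (count id u < w).

Definition AL_path (w d : nat) (sigma : seq bool) : Prop :=
  (forall i, i < size sigma -> AL_internal w d (take i sigma)) /\
  ~~ AL_internal w d sigma.

(* The tree (labelling x of internal nodes) of width w and depth d is
   shattered by H. Labels of non-internal strings are irrelevant. *)
Definition AL_shattered (X : Type) (H : (X -> bool) -> Prop) (w d : nat)
    (x : seq bool -> X) : Prop :=
  forall sigma, AL_path w d sigma ->
    exists h, H h /\
      forall i, i < size sigma -> h (x (take i sigma)) = nth false sigma i.

Definition AL_ub (X : Type) (H : (X -> bool) -> Prop) (w k : nat) : Prop :=
  forall d (x : seq bool -> X), AL_shattered H w d x -> d <= k.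

Definition decP (P : Prop) : bool :=
  if excluded_middle_informative P then true else false.

Lemma AL_ub_ex (X : Type) (H : (X -> bool) -> Prop) (w : nat) :
  (exists k, AL_ub H w k) -> exists k, decP (AL_ub H w k).
Proof.
move=> [k Hk]; exists k; rewrite /decP.
by case: excluded_middle_informative.
Qed.

(* AL_w(H) as an extended natural number: None = infinity; otherwise the
   largest depth of a shattered tree (= least upper bound; 0 if none). *)
Definition AL (X : Type) (H : (X -> bool) -> Prop) (w : nat) : option nat :=
  match excluded_middle_informative (exists k, AL_ub H w k) with
  | left ex => Some (ex_minn (AL_ub_ex ex))
  | right _ => None
  end.

Definition le_ext (m : nat) (a : option nat) : Prop :=
  match a with Some k => m <= k | None => True end.

From Pilot Require Import Defs.
From mathcomp Require Import all_boot.
From Stdlib Require Import ClassicalEpsilon.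
Set Implicit Arguments. Unset Strict Implicit. Unset Printing Implicit Defensive.

(* The learner predicts 1 exactly when some hypothesis consistent with the
   revealed labels predicts 1.  It never errs on a positive example, since the
   target is always consistent; so every mistake is a false positive on some
   x_k, at which point some consistent h_k has h_k(x_k) = 1 while the label
   (and the target) is 0, and all later consistent hypotheses vanish on x_k.
   The mistaken instances x_1, ..., x_m thus form a staircase: h_k vanishes on
   x_1, ..., x_(k-1) and is 1 on x_k, and the target vanishes on all of them.
   Labelling the node 0^k by x_(k+1) gives a width-1 AL tree of depth m
   shattered by the h_k (paths 0^k 1) and the target (path 0^m). *)

Lemma decPP (P : Prop) : reflect P (Defs.decP P).
Proof. by rewrite /Defs.decP; case: excluded_middle_informative => p; constructor. Qed.

Lemma count_id_eq0 (u : seq bool) : count id u = 0 -> u = nseq (size u) false.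
Proof. by elim: u => [|[] u IHu] //= /IHu {1}->. Qed.

Lemma AL_path_width1 (d : nat) (sigma : seq bool) : AL_path 1 d sigma ->
  sigma = nseq d false \/ exists2 k, k < d & sigma = rcons (nseq k false) true.
Proof.
case/lastP: sigma => [|u b] [prefix_internal]; rewrite /AL_internal negb_and -!leqNgt.
  by rewrite /= orbF leqn0 => /eqP->; left.
have := prefix_internal (size u); rewrite size_rcons ltnSn -cats1 take_size_cat //.
case/(_ isT)/andP=> lt_ud; rewrite ltnS leqn0 => /eqP/count_id_eq0 u_nseq.
rewrite {}u_nseq size_nseq in lt_ud *; case: b {prefix_internal} => [_|].
  by right; exists (size u); rewrite ?cats1.
rewrite -[[:: false]]/(nseq 1 false) -nseqD count_nseq mul0n orbF addn1 => le_d_u1.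
by left; congr nseq; apply/eqP; rewrite eqn_leq le_d_u1 lt_ud.
Qed.

Lemma AL_shattered_le_ext (X : Type) (H : (X -> bool) -> Prop) (w d : nat)
    (x : seq bool -> X) :
  AL_shattered H w d x -> le_ext d (AL H w).
Proof.
rewrite /AL; case: excluded_middle_informative => //= ex shattered.
by case: ex_minnP => k /decPP ub _; apply: ub shattered.
Qed.

Section Staircase.
Variables (X : Type) (H : (X -> bool) -> Prop).

Definition zero_on (h : X -> bool) (c : seq X) : bool := all (fun x => ~~ h x) c.

Inductive staircase : seq X -> Prop :=
  | staircase_nil : staircase [::]
  | staircase_rcons c x h :
      staircase c -> H h -> zero_on h c -> h x -> staircase (rcons c x).

Lemma zero_on_nth (x0 : X) (h : X -> bool) (c : seq X) (i : nat) :
  zero_on h c -> i < size c -> h (nth x0 c i) = false.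
Proof. by move=> /(all_nthP x0) h0 /h0/negbTE. Qed.

Lemma staircase_nth (x0 : X) (c : seq X) (k : nat) : staircase c -> k < size c ->
  exists2 h, H h & (forall i, i < k -> h (nth x0 c i) = false) /\ h (nth x0 c k).
Proof.
elim=> {c} [|c x h _ IHc Hh h0 hx] //; rewrite size_rcons ltnS leq_eqVlt.
case/orP=> [/eqP-> | lt_kc].
  exists h => //; split=> [i lt_ic|]; last by rewrite nth_rcons ltnn eqxx.
  by rewrite nth_rcons lt_ic (zero_on_nth x0 h0).
have [h' Hh' [h'0 h'k]] := IHc lt_kc.
exists h' => //; split=> [i lt_ik|]; last by rewrite nth_rcons lt_kc.
by rewrite nth_rcons (ltn_trans lt_ik lt_kc) h'0.
Qed.

Lemma staircase_shattered (x0 : X) (hs : X -> bool) (c : seq X) :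
  staircase c -> H hs -> zero_on hs c ->
  AL_shattered H 1 (size c) (fun u => nth x0 c (size u)).
Proof.
move=> stair Hhs hs0 sigma /AL_path_width1[-> | [k lt_kc ->]].
  exists hs; split=> // i; rewrite size_nseq => lt_ic.
  by rewrite size_take size_nseq lt_ic nth_nseq lt_ic (zero_on_nth x0 hs0).
have [h Hh [h0 hk]] := staircase_nth x0 stair lt_kc.
exists h; split=> // i; rewrite size_rcons size_nseq ltnS => le_ik.
rewrite size_take size_rcons size_nseq ltnS le_ik nth_rcons size_nseq.
have [lt_ik|lt_ki|->] := ltngtP i k; last by [].
  by rewrite nth_nseq lt_ik h0.
by rewrite ltnNge le_ik in lt_ki.
Qed.

End Staircase.

Section OptimisticLearner.
Variables (X : Type) (H : (X -> bool) -> Prop).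

Definition agrees (h : X -> bool) (e : X * option bool) : bool :=
  if e.2 is Some y then h e.1 == y else true.

Definition consistent (h : X -> bool) (hist : history X) : bool :=
  all (agrees h) hist.

Lemma consistent_rcons (h : X -> bool) (hist : history X) (e : X * option bool) :
  consistent h (rcons hist e) = agrees h e && consistent h hist.
Proof. exact: all_rcons. Qed.

Definition optimist : learner X :=
  fun hist x => Defs.decP (exists h, H h /\ consistent h hist /\ h x).

Lemma optimist_true_positive (hs : X -> bool) (hist : history X) (x : X) :
  H hs -> consistent hs hist -> hs x -> optimist hist x.
Proof. by move=> Hhs hs_hist hsx; apply/decPP; exists hs. Qed.

Definition vanishing_staircase (hist : history X) (c : seq X) : Prop :=
  staircase H c /\ forall h, H h -> consistent h hist -> zero_on h c.

Lemma vanishing_staircase_rcons (hist : history X) (e : X * option bool) (c : seq X) :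
  vanishing_staircase hist c -> vanishing_staircase (rcons hist e) c.
Proof.
case=> stair c0; split=> // h Hh.
by rewrite consistent_rcons => /andP[_]; apply: c0.
Qed.

Lemma vanishing_staircase_false_positive (hist : history X) (x : X) (c : seq X) :
  optimist hist x -> vanishing_staircase hist c ->
  vanishing_staircase (rcons hist (x, Some false)) (rcons c x).
Proof.
move=> /decPP[h [Hh [h_hist hx]]] [stair c0]; split.
  exact: staircase_rcons stair Hh (c0 h Hh h_hist) hx.
move=> h' Hh'; rewrite consistent_rcons => /andP[/eqP h'x h'_hist].
by rewrite /zero_on all_rcons h'x /=; apply: c0.
Qed.

Lemma optimist_mistakes_staircase (hs : X -> bool) (hist : history X) (c : seq X)
    (s : seq (X * bool)) :
  H hs -> consistent hs hist -> all (fun p => hs p.1 == p.2) s ->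
  vanishing_staircase hist c ->
  exists2 c', size c' = size c + mistakes_from optimist hist s &
    staircase H c' /\ zero_on hs c'.
Proof.
move=> Hhs; elim: s hist c => [|[x y] s IHs] hist c hs_hist /=.
  by move=> _ [stair c0]; exists c; [rewrite addn0 | split; last exact: c0].
case/andP=> /eqP hsx hs_s van.
have hs_hist' o : agrees hs (x, o) -> consistent hs (rcons hist (x, o)).
  by rewrite consistent_rcons hs_hist andbT.
case p_eq: (optimist hist x); case: y hsx => /eqP hsx /=.
- have van' := vanishing_staircase_rcons (x, Some true) van.
  have [c' size_c' ?] := IHs _ _ (hs_hist' (Some true) hsx) hs_s van'.
  by exists c' => //; rewrite size_c'.
- have van' := vanishing_staircase_false_positive p_eq van.
  have [c' size_c' ?] := IHs _ _ (hs_hist' (Some false) hsx) hs_s van'.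
  by exists c' => //; rewrite size_c' size_rcons addSnnS.
- by rewrite (optimist_true_positive Hhs hs_hist (eqP hsx)) in p_eq.
- have van' := vanishing_staircase_rcons (x, None) van.
  have [c' size_c' ?] := IHs _ _ (hs_hist' None isT) hs_s van'.
  by exists c' => //; rewrite size_c'.
Qed.

End OptimisticLearner.

Theorem theorem4 (X : Type) (H : (X -> bool) -> Prop) :
  exists L : learner X,
    forall s : seq (X * bool), realizable H s -> le_ext (mistakes L s) (AL H 1).
Proof.
exists (optimist H) => s [hs [Hhs hs_s]].
case: s hs_s => [|[x0 y0] s] hs_s; first by case: (AL H 1).
have van0 : vanishing_staircase H [::] [::] by split=> //; exact: staircase_nil.
have [c size_c [stair hs0]] := optimist_mistakes_staircase (hist := [::]) Hhs isT hs_s van0.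
rewrite /mistakes -[mistakes_from _ _ _]/(0 + _) -size_c.
exact: AL_shattered_le_ext (staircase_shattered x0 stair Hhs hs0).
Qed.
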